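(* Let $\phi$ be an instance of \textsc{Max (2,3)-SAT} with $n$ variables and let $T_\phi$ be the tournament instance constructed from $\phi$ as described in the context. If $\phi$ admits an assignment that satisfies at least $k$ clauses, then $T_\phi$ has a seeding whose tournament value is at least $k+n$.
   Context: Tournament model: players form a finite set of size $2^{n'}$ totally ordered by strength (stronger beats weaker). A seeding is a bijection $\sigma$ from players to $[2^{n'}]$. In round $r=1,\dots,n'$, for each block of seed positions $\{(k-1)2^r+1,\dots,k2^r\}$, the winner $a$ of its first half $\{(k-1)2^r+1,\dots,(k-1)2^r+2^{r-1}\}$ plays the winner $b$ of its second half (a single-position block is won by the player seeded there), the stronger one wins the block, and the game has value $v(a,b)$ (values do not depend on the round). The tournament value is the sum of values of all games played. \textsc{Max (2,3)-SAT} instance: a CNF formula $\phi$ with variables $x_1,\dots,x_n$ and clauses $c_1,\dots,c_m$, each clause having exactly two literals and each variable appearing in at most three clauses. Construction of $T_\phi$: let $n'$ be the smallest integer with $16n\le 2^{n'}$ and $p=2^{n'}-16n$. Players: for each $i\in[n]$, variable players $x_i,x_i^T,x_i^F$ and special players $\widehat d_i,d_i,\widetilde d_i$; for each clause $c$, a clause player $c$; dummy players $f_1,\dots,f_{10n+p-m}$. Strength order (strongest first): $\widehat d_1>d_1>\widetilde d_1>\widehat d_2>d_2>\widetilde d_2>\dots>\widehat d_n>d_n>\widetilde d_n>x_1>x_1^T>x_1^F>\dots>x_n>x_n^T>x_n^F>c_1>\dots>c_m>f_1>\dots>f_{10n+p-m}$. Round-oblivious symmetric game values ($v(a,b)=v(b,a)$):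 for each $i$, $v(x_i,x_i^T)=v(x_i,x_i^F)=1$; for each clause $c$ containing a literal of variable $x$, $v(c,x^T)=1$ if $x$ appears non-negated in $c$ and $v(c,x^F)=1$ if it appears negated; for each $i$, $v(d_i,\widehat d_i)=v(d_i,\widetilde d_i)=v(d_i,x_i)=0$; for each $i$ and every player $Y$ for which the pair value has not been set above, $v(d_i,Y)=v(x_i,Y)=-5$; all remaining pairs have value $0$. Thus the values lie in $\{0,1,-5\}$. *)

From mathcomp Require Import all_boot all_order all_algebra.
Set Implicit Arguments. Unset Strict Implicit. Unset Printing Implicit Defensive.
Import Order.TTheory GRing.Theory Num.Theory.

(* Seed positions are 0-indexed: position j (0 <= j < 2^n') corresponds to
   seed j+1 of the paper.  [s j] is the player seeded at position j.
   Block k of round r is {k*2^r, ..., (k+1)*2^r - 1}; its first half is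
   block 2k of round r-1 and its second half is block 2k+1 of round r-1.
   [rank] measures strength: smaller rank = stronger. *)
Section Tournament.
Variables (P : Type) (rank : P -> nat) (v : P -> P -> int) (s : nat -> P).

Fixpoint winner (r k : nat) : P :=
  match r with
  | 0 => s k
  | r'.+1 =>
      let a := winner r' k.*2 in
      let b := winner r' k.*2.+1 in
      if rank a < rank b then a else b
  end.

Definition tournament_value (n' : nat) : int :=
  (\sum_(1 <= r < n'.+1) \sum_(0 <= k < 2 ^ (n' - r))
      v (winner r.-1 k.*2) (winner r.-1 k.*2.+1))%R.
End Tournament.

(* a literal is (variable, negated?) ; a clause is a pair of literals *)
Definition literal (n : nat) := ('I_n * bool)%type.
Definition clause (n : nat) := (literal n * literal n)%type.

Definition lit_var n (l : literal n) : 'I_n := l.1.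
Definition clause_has_var n (c : clause n) (x : 'I_n) : bool :=
  (lit_var c.1 == x) || (lit_var c.2 == x).
Definition clause_has_lit n (c : clause n) (x : 'I_n) (b : bool) : bool :=
  (c.1 == (x, b)) || (c.2 == (x, b)).

Definition max23_instance n m (phi : 'I_m -> clause n) : Prop :=
  (forall j : 'I_m, (phi j).1 != (phi j).2) /\  (forall x : 'I_n, #|[pred j : 'I_m | clause_has_var (phi j) x]| <= 3).

Definition lit_sat n (a : 'I_n -> bool) (l : literal n) : bool :=
  if l.2 then ~~ a l.1 else a l.1.
Definition clause_sat n (a : 'I_n -> bool) (c : clause n) : bool :=
  lit_sat a c.1 || lit_sat a c.2.
Definition num_sat n m (phi : 'I_m -> clause n) (a : 'I_n -> bool) : nat :=
  #|[pred j : 'I_m | clause_sat a (phi j)]|.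

Inductive player (n m q : nat) : Type :=
  | Dhat of 'I_n
  | Dd   of 'I_n
  | Dtil of 'I_n
  | Xv   of 'I_n
  | XT   of 'I_n
  | XF   of 'I_n
  | Cl   of 'I_m
  | Fd   of 'I_q.

Definition prank n m q (a : player n m q) : nat :=
  match a with
  | Dhat i => 3 * i
  | Dd i => 3 * i + 1
  | Dtil i => 3 * i + 2
  | Xv i => 3 * n + 3 * i
  | XT i => 3 * n + 3 * i + 1
  | XF i => 3 * n + 3 * i + 2
  | Cl j => 6 * n + j
  | Fd j => 6 * n + m + j
  end.

Section Values.
Variables (n m q : nat) (phi : 'I_m -> clause n).

Definition one_pair (a b : player n m q) : bool :=
  match a, b with
  | Xv i, XT j => i == j
  | Xv i, XF j => i == j
  | Cl c, XT x => clause_has_lit (phi c) x false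
  | Cl c, XF x => clause_has_lit (phi c) x true
  | _, _ => false
  end.

Definition zero_pair (a b : player n m q) : bool :=
  match a, b with
  | Dd i, Dhat j => i == j
  | Dd i, Dtil j => i == j
  | Dd i, Xv j => i == j
  | _, _ => false
  end.

Definition is_d_or_x (a : player n m q) : bool :=
  match a with Dd _ | Xv _ => true | _ => false end.

Definition game_value (a b : player n m q) : int :=
  if one_pair a b || one_pair b a then 1%R
  else if zero_pair a b || zero_pair b a then 0%R
  else if is_d_or_x a || is_d_or_x b then (-5)%R
  else 0%R.
End Values.

(** Charge every clause to the
    variable of one of its satisfied literals (of any literal if it is
    unsatisfied); as a variable occurs in at most three clauses, the clauses
    charged to a variable can be numbered 0, 1, 2.  Give variable [i] the
    sixteen consecutive seeds starting at [16 i]: [d_i], [d~_i], [x_i], the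
    literal player of [x_i] made false by [a], [d^_i], three dummies, the literal
    player made true by [a], the charged clauses at offsets 9, 10, 12, and
    dummies elsewhere; all seeds beyond [16 n] are dummies.  Inside its block,
    [x_i] beats the false literal (value 1), the true literal then meets the
    three charged clauses in rounds 1 to 3 (value 1 for each satisfied one),
    [d_i] eliminates [x_i] at no cost and [d^_i] wins the block.  No other game
    involves a [d]- or [x]-player, so every other game has value 0 or 1, and the
    tournament is worth at least [n + k]. *)

From HB Require Import structures.
From mathcomp Require Import all_boot all_order all_algebra.
From mathcomp Require Import zify.
Import Order.TTheory GRing.Theory Num.Theory.
Set Implicit Arguments. Unset Strict Implicit. Unset Printing Implicit Defensive.

Arguments Dhat {n m q}. Arguments Dd {n m q}. Arguments Dtil {n m q}. Arguments Xv {n m q}.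
Arguments XT {n m q}. Arguments XF {n m q}. Arguments Cl {n m q}. Arguments Fd {n m q}.

Lemma big_nat_blocks (R : Type) (idx : R) (op : Monoid.law idx) (F : nat -> R) M L :
  \big[op/idx]_(0 <= k < M * L) F k =
  \big[op/idx]_(0 <= i < M) \big[op/idx]_(0 <= k < L) F (i * L + k).
Proof.
elim: M => [|M IH]; first by rewrite !big_geq.
rewrite big_nat_recr //= -IH mulSn addnC (big_cat_nat _ (leq_addr _ _)) //=.
congr (op _ _); rewrite -{1}[M * L]add0n big_addn addKn.
by apply: eq_bigr => k _; rewrite addnC.
Qed.

Section Knockout.
Variables (P : Type) (rank : P -> nat) (v : P -> P -> int).

Definition duel (x y : P) : P := if rank x < rank y then x else y.

Local Notation winner := (winner rank).
Local Notation value := (tournament_value rank v).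

Definition game (s : nat -> P) (r k : nat) : int := v (winner s r k.*2) (winner s r k.*2.+1).

Lemma winnerS s r k : winner s r.+1 k = duel (winner s r k.*2) (winner s r k.*2.+1).
Proof. by []. Qed.

Lemma winner2 s : winner s 2 0 = duel (duel (s 0) (s 1)) (duel (s 2) (s 3)).
Proof. by []. Qed.

Lemma duelL x y : rank x < rank y -> duel x y = x.
Proof. by rewrite /duel => ->. Qed.

Lemma duelR x y : rank y <= rank x -> duel x y = y.
Proof. by rewrite /duel ltnNge => ->. Qed.

Lemma duel_inv (Q : pred P) x y : Q x -> Q y -> Q (duel x y).
Proof. by rewrite /duel; case: ifP. Qed.

Lemma winner_inv (Q : pred P) s r k : (forall j, Q (s j)) -> Q (winner s r k).
Proof. by move=> Qs; elim: r k => [|r IH] k //=; apply: duel_inv. Qed.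

Lemma winnerD s r b k : winner s (r + b) k = winner (winner s b) r k.
Proof. by elim: r k => [|r IH] k //; rewrite addSn !winnerS !IH. Qed.

Lemma winner_block s r c i k :
  winner s r (i * 2 ^ c + k) = winner (fun j => s (i * 2 ^ (c + r) + j)) r k.
Proof.
elim: r c k => [|r IH] c k; first by rewrite addn0.
by rewrite !winnerS doubleD -mul2n mulnCA -expnS -addnS !IH addSnnS.
Qed.

Lemma winner_blockE s r j : winner s r j = winner (fun k => s (j * 2 ^ r + k)) r 0.
Proof. by have := winner_block s r 0 j 0; rewrite expn0 muln1 addn0. Qed.

Lemma game_block s r c i k :
  game s r (i * 2 ^ c + k) = game (fun j => s (i * 2 ^ (c + r.+1) + j)) r k.
Proof.
by rewrite /game doubleD -mul2n mulnCA -expnS -addnS !winner_block addSnnS.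
Qed.

Lemma tournament_valueE s n' :
  value s n' = (\sum_(1 <= r < n'.+1) \sum_(0 <= k < 2 ^ (n' - r)) game s r.-1 k)%R.
Proof. by []. Qed.

Lemma tournament_valueD s a b :
  value s (a + b) =
  (\sum_(0 <= i < 2 ^ a) value (fun j => s (i * 2 ^ b + j)%N) b + value (winner s b) a)%R.
Proof.
rewrite !tournament_valueE (big_cat_nat _ (n := b.+1)) //=; last by rewrite ltnS leq_addl.
congr (_ + _)%R.
  rewrite exchange_big_nat; apply: eq_big_nat => -[//|r] /andP[_ r_le] /=.
  rewrite -addnBA // expnD big_nat_blocks; apply: eq_bigr => i _; apply: eq_bigr => k _.
  by rewrite game_block subnK.
rewrite -[b.+1]add1n big_addn -addSn addnK; apply: eq_big_nat => -[//|r] _.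
by rewrite subnDr addSn; apply: eq_bigr => k _; rewrite /game /= !winnerD.
Qed.

Lemma tournament_value2 s :
  value s 2 = (v (s 0%N) (s 1%N) + v (s 2%N) (s 3%N)
                + v (duel (s 0%N) (s 1%N)) (duel (s 2%N) (s 3%N)))%R.
Proof. by rewrite tournament_valueE /index_iota /= !big_cons !big_nil !addr0. Qed.

Lemma tournament_value_ge0 (Q : pred P) s :
  (forall x y, Q x -> Q y -> 0 <= v x y)%R -> (forall j, Q (s j)) ->
  forall r, (0 <= value s r)%R.
Proof.
move=> v_ge0 Qs r; do 2!apply: sumr_ge0 => ? _.
by apply: v_ge0; apply: winner_inv.
Qed.
End Knockout.

Lemma inj_in_extend_bij (T : finType) N (D : {pred T}) (f : T -> 'I_N) :
  {in D &, injective f} -> #|T| = N ->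
  exists2 g : T -> 'I_N, bijective g & {in D, g =1 f}.
Proof.
move=> f_inj cardT; set free := enum (~: (f @: D)); set rest := enum [predC D].
have size_rest : size rest = size free.
  rewrite -!cardE; apply/eqP; rewrite -(eqn_add2l #|D|) cardC.
  by rewrite -{1}(card_in_imset f_inj) cardsC card_ord cardT.
pose g x := if x \in D then f x else nth (f x) free (index x rest).
have idx_lt x : x \notin D -> index x rest < size free.
  by move=> xD; rewrite -size_rest index_mem mem_enum.
have g_free x : x \notin D -> g x \in free.
  by move=> xD; rewrite /g (negbTE xD) mem_nth ?idx_lt.
have g_inj : injective g.
  have g_mixed x y : x \in D -> y \notin D -> g x != g y.
    move=> xD yD; apply: contraTneq (g_free y yD) => <-.
    by rewrite /g xD mem_enum in_setC imset_f.
  move=> x y; case: (boolP (x \in D)) => xD; case: (boolP (y \in D)) => yD gxy.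
  - by move: gxy; rewrite /g xD yD; apply: f_inj.
  - by move: (g_mixed x y xD yD); rewrite gxy eqxx.
  - by move: (g_mixed y x yD xD); rewrite gxy eqxx.
  move: (congr1 (index^~ free) gxy); rewrite /g (negbTE xD) (negbTE yD).
  rewrite !nthK ?enum_uniq ?inE ?idx_lt //.
  by apply: (index_inj x); rewrite /rest mem_enum.
exists g; last by move=> x xD; rewrite /g xD.
by apply: (inj_card_bij g_inj); rewrite card_ord cardT.
Qed.

Section PlayerFinite.
Variables n m q : nat.

Definition player_code := ('I_n + 'I_n + 'I_n + 'I_n + 'I_n + 'I_n + 'I_m + 'I_q)%type.

Definition encode_player (p : player n m q) : player_code :=
  match p with
  | Dhat i => inl (inl (inl (inl (inl (inl (inl i))))))
  | Dd i => inl (inl (inl (inl (inl (inl (inr i))))))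
  | Dtil i => inl (inl (inl (inl (inl (inr i)))))
  | Xv i => inl (inl (inl (inl (inr i))))
  | XT i => inl (inl (inl (inr i)))
  | XF i => inl (inl (inr i))
  | Cl c => inl (inr c)
  | Fd f => inr f
  end.

Definition decode_player (x : player_code) : player n m q :=
  match x with
  | inl (inl (inl (inl (inl (inl (inl i)))))) => Dhat i
  | inl (inl (inl (inl (inl (inl (inr i)))))) => Dd i
  | inl (inl (inl (inl (inl (inr i))))) => Dtil i
  | inl (inl (inl (inl (inr i)))) => Xv i
  | inl (inl (inl (inr i))) => XT i
  | inl (inl (inr i)) => XF i
  | inl (inr c) => Cl c
  | inr f => Fd f
  end.

Lemma encode_playerK : cancel encode_player decode_player.
Proof. by case. Qed.

Lemma decode_playerK : cancel decode_player encode_player.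
Proof. by do 7!case. Qed.
End PlayerFinite.

HB.instance Definition _ n m q :=
  Finite.copy (player n m q) (can_type (@encode_playerK n m q)).

Lemma card_player n m q : #|{: player n m q}| = 6 * n + m + q.
Proof.
rewrite (bij_eq_card (Bijective (@encode_playerK n m q) (@decode_playerK n m q))).
by rewrite !card_sum !card_ord; lia.
Qed.

Section ClauseKey.
Variables (n m : nat) (phi : 'I_m -> clause n) (a : 'I_n -> bool).

Definition chosen_var (c : 'I_m) : 'I_n :=
  if lit_sat a (phi c).1 then (phi c).1.1 else (phi c).2.1.

Definition chosen_rank (c : 'I_m) : nat :=
  index c (enum [pred c' | chosen_var c' == chosen_var c]).

Lemma chosen_var_sat c :
  clause_sat a (phi c) -> clause_has_lit (phi c) (chosen_var c) (~~ a (chosen_var c)).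
Proof.
rewrite /clause_sat /clause_has_lit /chosen_var /lit_sat.
case: (phi c) => [[x1 b1] [x2 b2]] /=.
by case: b1; case: b2; case E1: (a x1); case E2: (a x2); rewrite /= ?E1 ?E2 ?eqxx ?orbT.
Qed.

Lemma clause_has_chosen_var c : clause_has_var (phi c) (chosen_var c).
Proof. by rewrite /clause_has_var /chosen_var /lit_var; case: ifP; rewrite eqxx ?orbT. Qed.

Lemma chosen_rank_lt3 c : max23_instance phi -> chosen_rank c < 3.
Proof.
case=> _ /(_ (chosen_var c)); apply: leq_trans.
apply: (@leq_trans #|[pred c' | chosen_var c' == chosen_var c]|).
  by rewrite cardE index_mem mem_enum inE.
by apply/subset_leq_card/subsetP => c'; rewrite !inE => /eqP <-; apply: clause_has_chosen_var.
Qed.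

Lemma clause_key : max23_instance phi ->
  exists key : 'I_m -> 'I_n * 'I_3, injective key /\
    forall c, clause_sat a (phi c) -> clause_has_lit (phi c) (key c).1 (~~ a (key c).1).
Proof.
move=> H23; exists (fun c => (chosen_var c, inord (chosen_rank c))); split; last first.
  by move=> c; apply: chosen_var_sat.
move=> c1 c2 [var12 /(congr1 (@nat_of_ord 3))]; rewrite !inordK ?chosen_rank_lt3 //.
by rewrite /chosen_rank var12; apply: (index_inj c1); rewrite mem_enum inE ?var12.
Qed.
End ClauseKey.

Section Games.
Variables (n m q : nat) (phi : 'I_m -> clause n).
Local Notation player := (player n m q).
Local Notation gv := (@game_value n m q phi).
Local Notation rank := (@prank n m q).

Definition is_dummy (p : player) : bool := if p is Fd _ then true else false.
Definition is_low (p : player) : bool := match p with Cl _ | Fd _ => true | _ => false end.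

Lemma dummy_low p : is_dummy p -> is_low p.
Proof. by case: p. Qed.

Lemma low_not_d_or_x p : is_low p -> ~~ is_d_or_x p.
Proof. by case: p. Qed.

Lemma game_value_ge0 x y : ~~ is_d_or_x x -> ~~ is_d_or_x y -> (0 <= gv x y)%R.
Proof. by move=> /negbTE dx /negbTE dy; rewrite /game_value dx dy; repeat case: ifP. Qed.

Lemma game_value_low x y : is_low x -> is_low y -> gv x y = 0%R.
Proof. by case: x => // ? _; case: y. Qed.

Lemma game_value_dummy x y : ~~ is_d_or_x x -> is_dummy y -> gv x y = 0%R.
Proof. by case: y => // f; case: x. Qed.

Lemma rank_low p : is_low p -> 6 * n <= rank p.
Proof. by case: p => //= j _; lia. Qed.

Lemma duel_low x y : rank x < 6 * n -> is_low y -> duel rank x y = x.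
Proof. by move=> x_lt /rank_low y_ge; apply: duelL; apply: leq_trans y_ge. Qed.

Lemma duel_Dd_Dhat i : duel rank (Dd i) (Dhat i) = Dhat i.
Proof. by apply: duelR => /=; lia. Qed.

Lemma game_value_duel_dummy z x y : ~~ is_d_or_x z -> is_low x -> is_dummy y ->
  gv z (duel rank x y) = gv z x.
Proof.
move=> z_dx; case: x => // [c|f] _ y_dummy.
  by case: y y_dummy => // g _; rewrite /duel ifT //= -addnA ltn_add2l ltn_addr.
by rewrite !game_value_dummy //; apply: duel_inv.
Qed.
End Games.

Section Layout.
Variables (n m q : nat) (a : 'I_n -> bool) (key : 'I_m -> 'I_n * 'I_3).
Hypothesis key_inj : injective key.
Local Notation player := (player n m q).

Definition lit_true (i : 'I_n) : player := if a i then XT i else XF i.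
Definition lit_false (i : 'I_n) : player := if a i then XF i else XT i.

Definition clause_slot (r : 'I_3) : nat := nth 0 [:: 9; 10; 12] r.

Definition block_of (p : player) : nat :=
  match p with
  | Dhat i | Dd i | Dtil i | Xv i | XT i | XF i => i
  | Cl c => (key c).1
  | Fd _ => n
  end.

Definition offset (p : player) : nat :=
  match p with
  | Dd _ => 0 | Dtil _ => 1 | Xv _ => 2 | Dhat _ => 4
  | XT i => if a i then 8 else 3
  | XF i => if a i then 3 else 8
  | Cl c => clause_slot (key c).2
  | Fd _ => 0
  end.

(* Dummies get no seat from [seed_pos]; [seeding_exists] spreads them over the
   free seeds. *)
Definition seed_pos (p : player) : nat := block_of p * 16 + offset p.

Lemma clause_slot_inj : injective clause_slot.
Proof. by do 2![case=> [[|[|[|//]]] ?]] => //= _; apply/val_inj. Qed.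

Lemma clause_slot_mem r : clause_slot r \in [:: 9; 10; 12].
Proof. by case: r => [[|[|[|//]]] ?]. Qed.

Lemma clause_slot_gt8 r : 8 < clause_slot r.
Proof. by case: r => [[|[|[|//]]] ?]. Qed.

Lemma offset_not_low p : ~~ is_low p -> offset p \in [:: 0; 1; 2; 3; 4; 8].
Proof. by case: p => //= i _; case: (a i). Qed.

Lemma offset_lt16 p : offset p < 16.
Proof.
case: p => //= [i|i|c]; try by case: (a i).
by have := clause_slot_mem (key c).2; rewrite !inE => /or3P[] /eqP ->.
Qed.

Lemma block_offset_inj b1 b2 o1 o2 :
  o1 < 16 -> o2 < 16 -> b1 * 16 + o1 = b2 * 16 + o2 -> b1 = b2 /\ o1 = o2.
Proof. lia. Qed.

Lemma seed_pos_inj : {in [pred p | ~~ is_dummy p] &, injective seed_pos}.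
Proof.
(* Offsets tell the kinds apart (clauses sit above offset 8); clauses sharing a
   block are told apart by their key. *)
move=> p1 p2; rewrite !inE => nd1 nd2 /block_offset_inj[]; try exact: offset_lt16.
case: p1 nd1 => [i|i|i|i|i|i|c|//] _; case: p2 nd2 => [j|j|j|j|j|j|d|//] _ /=.
all: move=> /val_inj blk off; subst=> //.
all: try by case: (a _) off.
all: try by move: (clause_slot_gt8 (key c).2); rewrite off; first [lia | case: (a _); lia].
all: try by move: (clause_slot_gt8 (key d).2); rewrite -off; first [lia | case: (a _); lia].
suff -> : c = d by [].
apply: key_inj; move: blk (clause_slot_inj off).
by case: (key c) => ? ?; case: (key d) => ? ? /= -> ->.
Qed.

Lemma offset_named p : ~~ is_dummy p -> offset p \in [:: 0; 1; 2; 3; 4; 8; 9; 10; 12].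
Proof.
case: p => //= [i|i|c] _; try by case: (a i).
by move: (clause_slot_mem (key c).2); rewrite !inE => /or3P[] ->; rewrite ?orbT.
Qed.

Lemma lit_true_not_dummy i : ~~ is_dummy (lit_true i).
Proof. by rewrite /lit_true; case: (a i). Qed.

Lemma lit_false_not_dummy i : ~~ is_dummy (lit_false i).
Proof. by rewrite /lit_false; case: (a i). Qed.

Lemma lit_true_not_d_or_x i : ~~ is_d_or_x (lit_true i).
Proof. by rewrite /lit_true; case: (a i). Qed.

Lemma seed_pos_lit_true i : seed_pos (lit_true i) = i * 16 + 8.
Proof. by rewrite /lit_true /seed_pos; case E: (a i) => /=; rewrite E. Qed.

Lemma seed_pos_lit_false i : seed_pos (lit_false i) = i * 16 + 3.
Proof. by rewrite /lit_false /seed_pos; case E: (a i) => /=; rewrite E. Qed.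

Lemma rank_lit_true i : 3 * n <= prank (lit_true i) < 6 * n.
Proof. by have := ltn_ord i; rewrite /lit_true; case: (a i) => /=; lia. Qed.

Lemma rank_lit_false (i : 'I_n) : 3 * n + 3 * i < prank (lit_false i).
Proof. by rewrite /lit_false; case: (a i) => /=; lia. Qed.

Lemma seed_pos_lt p : ~~ is_dummy p -> seed_pos p < n * 16.
Proof.
move=> nd; rewrite /seed_pos; have := offset_lt16 p.
suff : block_of p < n by lia.
by case: p nd => //= *; apply: ltn_ord.
Qed.

Lemma seeding_exists N : 6 * n + m + q = N -> n * 16 <= N -> 0 < q ->
  exists (sigma : player -> 'I_N) (s : nat -> player),
    [/\ bijective sigma, forall p, s (sigma p) = p,
        forall p, ~~ is_dummy p -> s (seed_pos p) = p
      & forall j, ~~ is_dummy (s j) -> seed_pos (s j) = j].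
Proof.
move=> cardN nN q_gt0; have N_gt0 : 0 < N by lia.
pose f p : 'I_N := insubd (Ordinal N_gt0) (seed_pos p).
have f_pos p : ~~ is_dummy p -> f p = seed_pos p :> nat.
  by move=> nd; rewrite val_insubd (leq_trans (seed_pos_lt nd)).
have f_inj : {in [pred p | ~~ is_dummy p] &, injective f}.
  by move=> p1 p2 nd1 nd2 /(congr1 (@nat_of_ord N)); rewrite !f_pos //; apply: seed_pos_inj.
have [sigma [sigma' sigmaK sigma'K] sigma_f] :=
  inj_in_extend_bij f_inj (etrans (card_player n m q) cardN).
(* Seeds past [N] are never played; filling them with a dummy makes every seat
   outside the variable blocks a dummy. *)
pose dummy : player := Fd (Ordinal q_gt0).
exists sigma, (fun j => if insub j is Some o then sigma' o else dummy); split.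
- by exists sigma'.
- by move=> p; rewrite valK.
- by move=> p nd; rewrite -(f_pos p nd) -sigma_f // valK.
move=> j; case: insubP => [o _ <- nd|//].
by rewrite -f_pos // -sigma_f // sigma'K.
Qed.
End Layout.

Section Analysis.
Variables (n m q : nat) (phi : 'I_m -> clause n) (a : 'I_n -> bool).
Variable key : 'I_m -> 'I_n * 'I_3.
Hypothesis key_inj : injective key.
Hypothesis key_sat :
  forall c, clause_sat a (phi c) -> clause_has_lit (phi c) (key c).1 (~~ a (key c).1).
Local Notation player := (player n m q).
Local Notation rank := (@prank n m q).
Local Notation gv := (@game_value n m q phi).
Local Notation W := (winner rank).
Local Notation duel := (duel rank).
Local Notation seed_pos := (@seed_pos n m q a key).
Local Notation offset := (@offset n m q a key).
Local Notation lit_true := (lit_true m q a).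
Local Notation lit_false := (lit_false m q a).

Variable s : nat -> player.
Hypothesis s_seed : forall p, ~~ is_dummy p -> s (seed_pos p) = p.
Hypothesis seed_pos_s : forall j, ~~ is_dummy (s j) -> seed_pos (s j) = j.

Lemma seat_offset i o :
  o < 16 -> ~~ is_dummy (s (i * 16 + o)) -> offset (s (i * 16 + o)) = o.
Proof.
move=> o_lt nd; have [] // := block_offset_inj _ o_lt (seed_pos_s nd).
exact: offset_lt16.
Qed.

Lemma seat_low i o : o < 16 -> o \notin [:: 0; 1; 2; 3; 4; 8] -> is_low (s (i * 16 + o)).
Proof.
move=> o_lt; apply: contraNT => not_low.
have nd : ~~ is_dummy (s (i * 16 + o)) by apply: contra not_low; apply: dummy_low.
by rewrite -(seat_offset o_lt nd) offset_not_low.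
Qed.

Lemma seat_dummy i o :
  o < 16 -> o \notin [:: 0; 1; 2; 3; 4; 8; 9; 10; 12] -> is_dummy (s (i * 16 + o)).
Proof.
by move=> o_lt; apply: contraNT => nd; rewrite -(seat_offset o_lt nd) offset_named.
Qed.

Lemma seat_beyond j : n * 16 <= j -> is_dummy (s j).
Proof.
move=> j_ge; apply: contraT => nd.
by have := seed_pos_lt a key nd; rewrite seed_pos_s // ltnNge j_ge.
Qed.

Section Gadget.
Variable i : 'I_n.
Let t o := s (i * 16 + o).
Let i_lt : i < n := ltn_ord i. (* in the context of every [lia] below *)

Lemma gadget_seats : [/\ t 0 = Dd i, t 1 = Dtil i, t 2 = Xv i & t 4 = Dhat i].
Proof.
by split; [exact: (@s_seed (Dd i)) | exact: (@s_seed (Dtil i))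
          | exact: (@s_seed (Xv i)) | exact: (@s_seed (Dhat i))].
Qed.

Lemma gadget_lit_seats : t 3 = lit_false i /\ t 8 = lit_true i.
Proof.
rewrite /t -(seed_pos_lit_false q a key) -(seed_pos_lit_true q a key).
by rewrite !s_seed ?lit_false_not_dummy ?lit_true_not_dummy.
Qed.

Lemma gadget_quarter0 :
  tournament_value rank gv (fun k => t (0 * 4 + k)) 2 = 1%R
  /\ W (fun k => t (0 * 4 + k)) 2 0 = Dd i.
Proof.
have [t0 t1 t2 _] := gadget_seats; have [t3 _] := gadget_lit_seats.
have dd : duel (Dd i) (Dtil i) = Dd i by apply: duelL => /=; lia.
have xl : duel (Xv i) (lit_false i) = Xv i.
  by apply: duelL; have := rank_lit_false m q a i; rewrite /=; lia.
have d_x : duel (Dd i) (Xv i) = Dd i by apply: duelL => /=; lia.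
rewrite tournament_value2 winner2 /= t0 t1 t2 t3 dd xl d_x; split=> //.
by rewrite /lit_false /game_value; case: (a i); rewrite /= !eqxx.
Qed.

Lemma gadget_quarter1 :
  tournament_value rank gv (fun k => t (1 * 4 + k)) 2 = 0%R
  /\ W (fun k => t (1 * 4 + k)) 2 0 = Dhat i.
Proof.
have [_ _ _ t4] := gadget_seats.
have dhat_lt : rank (Dhat i) < 6 * n by rewrite /=; lia.
have [d5 d6 d7] : [/\ is_dummy (t 5), is_dummy (t 6) & is_dummy (t 7)].
  by split; apply: seat_dummy.
have d67 : is_dummy (duel (t 6) (t 7)) by apply: duel_inv.
rewrite tournament_value2 winner2 /= t4.
rewrite (duel_low dhat_lt (dummy_low d5)) (duel_low dhat_lt (dummy_low d67)).
by rewrite game_value_dummy // game_value_low ?dummy_low // game_value_dummy.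
Qed.

Lemma gadget_quarter2 :
  tournament_value rank gv (fun k => t (2 * 4 + k)) 2
    = (gv (lit_true i) (t 9) + gv (lit_true i) (t 10))%R
  /\ W (fun k => t (2 * 4 + k)) 2 0 = lit_true i.
Proof.
have [_ t8] := gadget_lit_seats; have /andP[_ lt_lt] := rank_lit_true m q a i.
have [l9 l10 d11] : [/\ is_low (t 9), is_low (t 10) & is_dummy (t 11)].
  by split; [apply: seat_low | apply: seat_low | apply: seat_dummy].
have l1011 : is_low (duel (t 10) (t 11)) by apply: duel_inv => //; apply: dummy_low.
rewrite tournament_value2 winner2 /= t8 (duel_low lt_lt l9) (duel_low lt_lt l1011).
rewrite (game_value_low phi l10 (dummy_low d11)) addr0 game_value_duel_dummy //.
exact: lit_true_not_d_or_x.
Qed.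

Lemma gadget_quarter3 :
  tournament_value rank gv (fun k => t (3 * 4 + k)) 2 = 0%R
  /\ gv (lit_true i) (W (fun k => t (3 * 4 + k)) 2 0) = gv (lit_true i) (t 12)
  /\ is_low (W (fun k => t (3 * 4 + k)) 2 0).
Proof.
have l12 : is_low (t 12) by apply: seat_low.
have [d13 d14 d15] : [/\ is_dummy (t 13), is_dummy (t 14) & is_dummy (t 15)].
  by split; apply: seat_dummy.
have l1213 : is_low (duel (t 12) (t 13)) by apply: duel_inv => //; apply: dummy_low.
have d1415 : is_dummy (duel (t 14) (t 15)) by apply: duel_inv.
rewrite tournament_value2 winner2 /= (game_value_low phi l12 (dummy_low d13)).
rewrite (game_value_low phi (dummy_low d14) (dummy_low d15)).
rewrite (game_value_low phi l1213 (dummy_low d1415)) !addr0; split=> //.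
split; last by apply: duel_inv => //; apply: dummy_low.
by rewrite !game_value_duel_dummy // lit_true_not_d_or_x.
Qed.

Lemma gadget_semifinalists :
  [/\ W t 2 0 = Dd i, W t 2 1 = Dhat i, W t 2 2 = lit_true i, is_low (W t 2 3)
    & gv (lit_true i) (W t 2 3) = gv (lit_true i) (t 12)].
Proof.
have [_ w0] := gadget_quarter0; have [_ w1] := gadget_quarter1.
have [_ w2] := gadget_quarter2; have [_ [w3 w3_low]] := gadget_quarter3.
rewrite (winner_blockE rank t 2 0) (winner_blockE rank t 2 1).
by rewrite (winner_blockE rank t 2 2) (winner_blockE rank t 2 3).
Qed.

Lemma gadget_winner : W t 4 0 = Dhat i.
Proof.
have [w0 w1 w2 w3_low _] := gadget_semifinalists.
have /andP[lt_ge lt_lt] := rank_lit_true m q a i.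
rewrite -[4]/(2 + 2) winnerD winner2 w0 w1 w2 (duel_low lt_lt w3_low) duel_Dd_Dhat.
by rewrite duelL //=; lia.
Qed.

Lemma gadget_value :
  tournament_value rank gv t 4 = (1 + \sum_(r < 3) gv (lit_true i) (t (clause_slot r)))%R.
Proof.
have [v0 _] := gadget_quarter0; have [v1 _] := gadget_quarter1.
have [v2 _] := gadget_quarter2; have [v3 _] := gadget_quarter3.
have [w0 w1 w2 w3_low w3] := gadget_semifinalists.
have /andP[_ lt_lt] := rank_lit_true m q a i.
have d_dhat : gv (Dd i) (Dhat i) = 0%R by rewrite /game_value /= eqxx.
have dhat_lit : gv (Dhat i) (lit_true i) = 0%R by rewrite /lit_true; case: (a i).
rewrite -[4]/(2 + 2) tournament_valueD tournament_value2 w0 w1 w2 w3.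
rewrite (duel_low lt_lt w3_low) duel_Dd_Dhat d_dhat dhat_lit.
rewrite -[2 ^ 2]/4 !big_nat_recl // big_geq // v0 v1 v2 v3 !big_ord_recl big_ord0 /=.
by rewrite !add0r !addr0 -!addrA.
Qed.
End Gadget.

Lemma seat_slot_low i r : is_low (s (i * 16 + clause_slot r)).
Proof. by apply: seat_low; case: r => [[|[|[|//]]] ?]. Qed.

Lemma slot_value_ge (i : 'I_n) (r : 'I_3) :
  (#|[pred c | clause_sat a (phi c) & key c == (i, r)]|%:Z
     <= gv (lit_true i) (s (i * 16 + clause_slot r)))%R.
Proof.
case: (pickP [pred c | clause_sat a (phi c) & key c == (i, r)]) => [c | none]; last first.
  rewrite eq_card0 //; apply: game_value_ge0; first exact: lit_true_not_d_or_x.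
  exact/low_not_d_or_x/seat_slot_low.
move=> /andP[c_sat /eqP c_key].
have card_le1 : #|[pred c | clause_sat a (phi c) & key c == (i, r)]| <= 1.
  apply/card_le1_eqP => x y /andP[_ /eqP kx] /andP[_ /eqP ky].
  by apply: key_inj; rewrite kx ky.
have pos_c : seed_pos (Cl c) = i * 16 + clause_slot r by rewrite /seed_pos /= c_key.
have := key_sat c_sat; rewrite -pos_c s_seed // c_key /= => c_lit.
have -> : gv (lit_true i) (Cl c) = 1%R.
  by rewrite /game_value /lit_true; case: (a i) c_lit => /= ->.
by rewrite lez_nat.
Qed.

Lemma num_sat_key :
  num_sat phi a =
  \sum_(i < n) \sum_(r < 3) #|[pred c | clause_sat a (phi c) & key c == (i, r)]|.
Proof.
rewrite pair_bigA /num_sat -sum1_card (partition_big key predT) //=.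
apply: eq_bigr => -[i r] _; rewrite -sum1_card; apply: eq_bigl => c.
by rewrite !inE.
Qed.

Lemma blocks_le_value n' : n * 16 <= 2 ^ n' ->
  (\sum_(i < n) tournament_value rank gv (fun o => s (i * 16 + o)) 4
     <= tournament_value rank gv s n')%R.
Proof.
move=> nN; pose Q p := ~~ @is_d_or_x n m q p.
have Q_ge0 : forall x y, Q x -> Q y -> (0 <= gv x y)%R by move=> x y; apply: game_value_ge0.
have Q_dummy p : is_dummy p -> Q p by move/dummy_low/low_not_d_or_x.
have [n0 | n_gt0] := posnP n.
  rewrite big1 => [|[i i_lt] _]; last by exfalso; lia.
  apply: (tournament_value_ge0 rank Q_ge0) => j.
  by apply/Q_dummy/seat_beyond; rewrite n0.
have n'_ge4 : 4 <= n' by rewrite -(@leq_exp2l 2) //; apply: leq_trans nN; rewrite /=; lia.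
have n_le : n <= 2 ^ (n' - 4) by rewrite -(leq_pmul2r (isT : 0 < 2 ^ 4)) -expnD subnK.
rewrite -(subnK n'_ge4) tournament_valueD (big_cat_nat _ n_le) // -addrA big_mkord lerDl.
have block_dummy i j : n <= i -> Q (s (i * 2 ^ 4 + j)).
  by move=> i_ge; apply/Q_dummy/seat_beyond; rewrite -[2 ^ 4]/16; nia.
apply: addr_ge0.
  rewrite big_nat_cond; apply: sumr_ge0 => i /andP[/andP[i_ge _] _].
  by apply: (tournament_value_ge0 rank Q_ge0) => j; apply: block_dummy.
apply: (tournament_value_ge0 rank Q_ge0) => j; rewrite winner_blockE.
have [j_lt | j_ge] := ltnP j n; last by apply: (winner_inv rank) => k; apply: block_dummy.
by rewrite (gadget_winner (Ordinal j_lt)).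
Qed.

Lemma value_ge n' : n * 16 <= 2 ^ n' ->
  ((n + num_sat phi a)%:Z <= tournament_value rank gv s n')%R.
Proof.
move=> nN; apply: le_trans (blocks_le_value nN).
have n_sum : (n%:R = \sum_(i < n) 1 :> int)%R by rewrite sumr_const card_ord.
rewrite num_sat_key PoszD -!natz natr_sum n_sum -big_split /=.
apply: ler_sum => i _; rewrite gadget_value lerD2l natr_sum.
by apply: ler_sum => r _; rewrite natz; apply: slot_value_ge.
Qed.
End Analysis.

Theorem lemma3 (n m : nat) (phi : 'I_m -> clause n) (n' k : nat) :
  max23_instance phi ->
  (16 * n <= 2 ^ n')%N ->
  (forall e, (16 * n <= 2 ^ e)%N -> (n' <= e)%N) ->
  (exists a : 'I_n -> bool, (k <= num_sat phi a)%N) ->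
  let p := (2 ^ n' - 16 * n)%N in
  let q := (10 * n + p - m)%N in
  exists (sigma : player n m q -> 'I_(2 ^ n')) (s : nat -> player n m q),
    bijective sigma /\ (forall a, s (sigma a) = a) /\
    ((k + n)%:Z <= tournament_value (@prank n m q) (game_value phi) s n')%R.
Proof.
move=> H23 HN _ [a Ha] p q.
have [key [key_inj key_sat]] := clause_key a H23.
have m_le : m <= 3 * n.
  by have := leq_card key key_inj; rewrite card_prod !card_ord mulnC.
have cardN : 6 * n + m + q = 2 ^ n' by rewrite /q /p; lia.
have q_gt0 : 0 < q by have := expn_gt0 2 n'; rewrite /q /p; lia.
have nN : n * 16 <= 2 ^ n' by rewrite mulnC.
have [sigma [s [sigma_bij sigmaK s_seed seed_pos_s]]] :=
  seeding_exists a key_inj cardN nN q_gt0.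
exists sigma, s; do 2!split => //.
apply: le_trans (value_ge key_inj key_sat s_seed seed_pos_s nN).
by rewrite lez_nat addnC leq_add2l.
Qed.
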